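(* Let $0<\Delta\le1$ and $T=\frac{\lambda_1}{\Delta}\ln\frac{1}{\Delta}$, and use the quantizer $q_r$ with variable-length encoding. There exist constants $C_2,C_3>0$, independent of $P$ and of the feedback rates (and of $\Delta$), such that for all $P>0$ $$\mathbb{E}[r_{\rm loss}]\le\log_2\Big(1+C_2P\,2^{-\min\{R_{r,{\rm VLE},1},R_{r,{\rm VLE},2}\}}\Big)\le C_3P\,2^{-\min\{R_{r,{\rm VLE},1},R_{r,{\rm VLE},2}\}}.$$
   Context: $H_1,H_2$ are independent exponential random variables with means $\lambda_1\ge\lambda_2>0$ (density $e^{-x/\lambda_i}/\lambda_i$, $x>0$); $P>0$ is the total power. For $a\ge b\ge0$ with $a>0$ let $A(a,b)=\frac{2b}{\sqrt{(a+b)^2+4ab^2P}+a+b}$. Full-CSI maximum minimum rate: $r_{\max}=\log_2(1+PH_1A(H_1,H_2))$ if $H_1\ge H_2$ and $r_{\max}=\log_2(1+PH_2A(H_2,H_1))$ if $H_1<H_2$. Quantizer with $\Delta>0$, $T\ge0$: $q_r(x)=\lfloor x/\Delta\rfloor\Delta$ for $x\le T\Delta$, $q_r(x)=T\Delta$ for $x>T\Delta$. Let $a_i=q_r(H_i)$; if $a_1\ge a_2$ let $(s,w)=(1,2)$, otherwise $(s,w)=(2,1)$. $\alpha_q=A(a_s,a_w)$ if $a_1,a_2>0$, else $\alpha_q=0$. Adapted rates: $r_{s,q}=\log_2(1+P\alpha_qa_s)$, $r_{w,q}=\log_2\big(1+\frac{Pa_w(1-\alpha_q)}{Pa_w\alpha_q+1}\big)$.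 Rate loss: $r_{\rm loss}=r_{\max}-\min\{r_{1,q},r_{2,q}\}$. Variable-length encoding: the quantization index $n$ (with $q_r(x)=n\Delta$) is sent with the $n$-th binary string in the list $0,1,00,01,10,11,000,\dots$, of length $\lfloor\log_2(n+2)\rfloor$. The feedback rate of Receiver $i$ is the expected codeword length $R_{r,{\rm VLE},i}=\mathbb{E}[\ell(H_i)]$, where $\ell(x)=\lfloor\log_2(\lfloor x/\Delta\rfloor+2)\rfloor$ for $x\le T\Delta$ and $\ell(x)=\lfloor\log_2(T+2)\rfloor$ for $x>T\Delta$. *)

From HB Require Import structures.
From mathcomp Require Import all_boot all_order all_algebra.
From mathcomp Require Import all_classical all_reals all_analysis.
Set Implicit Arguments. Unset Strict Implicit. Unset Printing Implicit Defensive.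
Import Order.TTheory GRing.Theory Num.Theory.
Local Open Scope ring_scope.
Local Open Scope classical_set_scope.

Section Defs.
Variable R : realType.

Definition log2 (x : R) : R := ln x / ln 2.

Definition Afun (P a b : R) : R :=
  2 * b / (Num.sqrt ((a + b) ^+ 2 + 4 * a * b ^+ 2 * P) + a + b).

Definition r_max (P h1 h2 : R) : R :=
  if h2 <= h1 then log2 (1 + P * h1 * Afun P h1 h2)
  else log2 (1 + P * h2 * Afun P h2 h1).

Definition q_r (Delta T x : R) : R :=
  if x <= T * Delta then (Num.floor (x / Delta))%:~R * Delta else T * Delta.

Definition r_min_q (P a1 a2 : R) : R :=
  let a_s := if a2 <= a1 then a1 else a2 in
  let a_w := if a2 <= a1 then a2 else a1 in
  let alpha := if (0 < a1) && (0 < a2) then Afun P a_s a_w else 0 in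
  let r_s := log2 (1 + P * alpha * a_s) in
  let r_w := log2 (1 + P * a_w * (1 - alpha) / (P * a_w * alpha + 1)) in
  Num.min r_s r_w.

Definition r_loss (P Delta T h1 h2 : R) : R :=
  r_max P h1 h2 - r_min_q P (q_r Delta T h1) (q_r Delta T h2).

Definition vle_len (Delta T x : R) : R :=
  if x <= T * Delta then (Num.floor (log2 ((Num.floor (x / Delta))%:~R + 2)))%:~R
  else (Num.floor (log2 (T + 2)))%:~R.

Definition exp_density (lam x : R) : R :=
  if 0 < x then expR (- (x / lam)) / lam else 0.

(* E[r_loss] with H1, H2 independent exponential (means lam1, lam2) *)
Definition E_rloss (lam1 lam2 P Delta T : R) : \bar R :=
  (\int[(@lebesgue_measure R) \x (@lebesgue_measure R)]_(h in [set: R * R])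
     (r_loss P Delta T h.1 h.2 * exp_density lam1 h.1 * exp_density lam2 h.2)%:E)%E.

Definition R_VLE (lam Delta T : R) : R :=
  Rintegral (@lebesgue_measure R) [set: R] (fun x => vle_len Delta T x * exp_density lam x).

End Defs.

From HB Require Import structures.
From mathcomp Require Import all_boot all_order all_algebra.
From mathcomp Require Import all_classical all_reals all_analysis.
From mathcomp Require Import measurable_realfun ring lra exponential_distribution.
Set Implicit Arguments.
Unset Strict Implicit.
Unset Printing Implicit Defensive.
Import Order.TTheory GRing.Theory Num.Theory.
Local Open Scope ring_scope.
Local Open Scope classical_set_scope.

(* Both the full-CSI rate and the adapted rate have the form log2 (1 + s(a, b)), where
   s(a, b) = P a A(a, b) is the common SINR of the max-min power split, the nonnegative
   root of b s^2 + (a + b) s = P a b.  The quantizer errs downward by at most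
   Δ + (H_i - TΔ)^+, and comparing the two quadratics shows that s increases by at most
   P d when both gains increase by at most d; hence the loss is at most log2 (1 + P Φ)
   with Φ = 2Δ + (H_1 - TΔ)^+ + (H_2 - TΔ)^+.  Bounding log2 (1 + P ·) by its tangent
   at m = (2 + 4λ_1 + 4λ_2)Δ and using E[(H - c)^+] <= 4λ e^(-c/λ) <= 4λΔ for c = TΔ
   gives E[r_loss] <= log2 (1 + P m).  Concavity of log2 also gives
   R_VLE,i <= log2 (λ_1/Δ + 2) + 4 / ln 2, i.e. Δ <= (λ_1 + 2) e^4 2^(-R_min), and the
   second inequality is log2 (1 + x) <= x / ln 2. *)

Section log2.
Variable R : realType.
Implicit Types x y : R.

Lemma ln2_gt0 : 0 < ln (2 : R).
Proof. by apply: ln_gt0; lra. Qed.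

Lemma ler_log2 x y : 0 < x -> x <= y -> log2 x <= log2 y.
Proof.
move=> x0 xy; rewrite /log2 ler_pM2r ?invr_gt0 ?ln2_gt0 //.
by rewrite ler_ln // posrE; lra.
Qed.

Lemma log2_ge0 x : 1 <= x -> 0 <= log2 x.
Proof. by move=> x1; apply: divr_ge0; [exact: ln_ge0 | exact: ltW ln2_gt0]. Qed.

Lemma log2_le_tangent x y : 0 < x -> 0 < y ->
  log2 x <= log2 y + (x - y) / (y * ln 2).
Proof.
move=> x0 y0; rewrite /log2 invfM mulrA -mulrDl ler_pM2r ?invr_gt0 ?ln2_gt0 //.
rewrite -lerBlDl -ln_div ?posrE //.
have hxy : -1 < x / y - 1 by have := divr_gt0 x0 y0; lra.
have := le_ln1Dx hxy; rewrite addrC subrK.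
by have -> : (x - y) / y = x / y - 1 by field; rewrite gt_eqF.
Qed.

Lemma log2_1D_subadd x y : 0 <= x -> 0 <= y ->
  log2 (1 + (x + y)) <= log2 (1 + x) + log2 (1 + y).
Proof.
move=> x0 y0.
have -> : log2 (1 + x) + log2 (1 + y) = log2 ((1 + x) * (1 + y)).
  by rewrite /log2 -mulrDl lnM // posrE; lra.
by apply: ler_log2; [lra | have := mulr_ge0 x0 y0; lra].
Qed.

Lemma log2_1D_le x : 0 <= x -> log2 (1 + x) <= x / ln 2.
Proof.
by move=> x0; rewrite /log2 ler_pM2r ?invr_gt0 ?ln2_gt0 // le_ln1Dx //; lra.
Qed.

End log2.

Section maxmin_snr.
Variable R : realType.
Implicit Types P a b t u w d : R.

(* At the split α = A(a, b) the strong user's SINR P α a equals the weak user's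
   P b (1 - α) / (P b α + 1); see [maxmin_snr_root] and [Afun_weak_snr]. *)
Definition maxmin_snr P a b := P * a * Afun P a b.

Lemma maxmin_snr_ge0 P a b : 0 <= P -> 0 <= a -> 0 <= b -> 0 <= maxmin_snr P a b.
Proof.
move=> P0 a0 b0; rewrite /maxmin_snr /Afun.
by rewrite !mulr_ge0 ?invr_ge0 ?addr_ge0 ?sqrtr_ge0.
Qed.

Lemma maxmin_snrE P a b : 0 <= P -> 0 < a -> 0 < b ->
  maxmin_snr P a b = (Num.sqrt ((a + b) ^+ 2 + 4 * a * b ^+ 2 * P) - (a + b)) / (2 * b).
Proof.
move=> P0 a0 b0; rewrite /maxmin_snr /Afun.
set E := (a + b) ^+ 2 + _; set Q := Num.sqrt E.
have E0 : 0 <= E by rewrite addr_ge0 ?sqr_ge0 // !mulr_ge0 ?sqr_ge0 // ltW.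
have QE : Q ^+ 2 = E by rewrite sqr_sqrtr.
have Q0 : 0 < Q + a + b by have := sqrtr_ge0 E; rewrite -/Q; lra.
have -> : (Q - (a + b)) / (2 * b) = (Q ^+ 2 - (a + b) ^+ 2) / (2 * b * (Q + a + b)).
  by field; rewrite !gt_eqF.
by rewrite QE /E; field; rewrite !gt_eqF.
Qed.

Lemma maxmin_snr_root P a b : 0 <= P -> 0 < a -> 0 < b ->
  b * maxmin_snr P a b ^+ 2 + (a + b) * maxmin_snr P a b = P * a * b.
Proof.
move=> P0 a0 b0; rewrite maxmin_snrE //.
set E := (a + b) ^+ 2 + _; set Q := Num.sqrt E.
have E0 : 0 <= E by rewrite addr_ge0 ?sqr_ge0 // !mulr_ge0 ?sqr_ge0 // ltW.
have -> : b * ((Q - (a + b)) / (2 * b)) ^+ 2 + (a + b) * ((Q - (a + b)) / (2 * b))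
    = (Q ^+ 2 - (a + b) ^+ 2) / (4 * b) by field; rewrite gt_eqF.
by rewrite sqr_sqrtr // /E; field; rewrite gt_eqF.
Qed.

Lemma maxmin_snr_le P a b t : 0 <= P -> 0 < a -> 0 < b -> 0 <= t ->
  P * a * b <= b * t ^+ 2 + (a + b) * t -> maxmin_snr P a b <= t.
Proof.
move=> P0 a0 b0 t0; rewrite -maxmin_snr_root //.
set s := maxmin_snr P a b => hst; rewrite leNgt; apply/negP => lt_ts.
have : b * t ^+ 2 <= b * s ^+ 2.
  by rewrite ler_pM2l // lerXn2r ?nnegrE ?(ltW lt_ts) // (le_trans t0 (ltW lt_ts)).
have : (a + b) * t < (a + b) * s by rewrite ltr_pM2l //; lra.
lra.
Qed.

Lemma maxmin_snr_le_weak P a b : 0 <= P -> 0 < a -> 0 < b -> maxmin_snr P a b <= P * b.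
Proof.
move=> P0 a0 b0; have s0 := maxmin_snr_ge0 P0 (ltW a0) (ltW b0).
have := maxmin_snr_root P0 a0 b0; set s := maxmin_snr P a b; move=> root.
rewrite -(ler_pM2l a0).
have : 0 <= b * s ^+ 2 + b * s by rewrite addr_ge0 // mulr_ge0 ?sqr_ge0 // ltW.
lra.
Qed.

Lemma maxmin_snr_sqrD_le P a b : 0 <= P -> 0 < a -> 0 < b ->
  maxmin_snr P a b ^+ 2 + maxmin_snr P a b <= P * a.
Proof.
move=> P0 a0 b0; have s0 := maxmin_snr_ge0 P0 (ltW a0) (ltW b0).
have := maxmin_snr_root P0 a0 b0; set s := maxmin_snr P a b; move=> root.
rewrite -(ler_pM2l b0).
have : 0 <= a * s by rewrite mulr_ge0 // ltW.
lra.
Qed.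

Lemma maxmin_snr_lipschitz P u w u0 w0 d : 0 < P -> 0 < u -> 0 < w ->
  0 < u0 -> 0 < w0 -> 0 <= d -> u <= u0 + d -> w <= w0 + d ->
  maxmin_snr P u w <= maxmin_snr P u0 w0 + P * d.
Proof.
move=> P0 u_gt0 w_gt0 u0_gt0 w0_gt0 d0 hu hw.
have P_ge0 := ltW P0.
have s0_ge0 := maxmin_snr_ge0 P_ge0 (ltW u0_gt0) (ltW w0_gt0).
have ub_w := maxmin_snr_le_weak P_ge0 u0_gt0 w0_gt0.
have ub_u := maxmin_snr_sqrD_le P_ge0 u0_gt0 w0_gt0.
have root := maxmin_snr_root P_ge0 u0_gt0 w0_gt0.
set s0 := maxmin_snr P u0 w0 in s0_ge0 ub_w ub_u root *.
set t := s0 + P * d.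
have Pd0 : 0 <= P * d by rewrite mulr_ge0.
have t0 : 0 <= t by rewrite addr_ge0.
(* Multiplying the quadratic of (u0, w0) at s0 by u w shows that t overshoots the
   quadratic of (u, w). *)
apply: maxmin_snr_le => //.
have A1 : (s0 ^+ 2 + s0) * (u0 + d) <= (t ^+ 2 + t) * u0.
  have : (s0 ^+ 2 + s0) * d <= P * u0 * d by rewrite ler_wpM2r.
  have : P * d * u0 <= P * d * (2 * s0 + P * d + 1) * u0.
    apply: ler_wpM2r; first exact: ltW.
    by rewrite -{1}[P * d]mulr1; apply: ler_wpM2l => //; lra.
  rewrite /t; lra.
have A2 : s0 * (w0 + d) <= t * w0.
  have : s0 * d <= P * w0 * d by rewrite ler_wpM2r.
  rewrite /t; lra.
have B1 : w0 * w * ((s0 ^+ 2 + s0) * u) <= w0 * w * ((t ^+ 2 + t) * u0).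
  apply: ler_wpM2l; first by rewrite mulr_ge0 // ltW.
  by apply: le_trans A1; apply: ler_wpM2l; rewrite ?addr_ge0 ?sqr_ge0.
have B2 : u0 * u * (s0 * w) <= u0 * u * (t * w0).
  apply: ler_wpM2l; first by rewrite mulr_ge0 // ltW.
  by apply: le_trans A2; apply: ler_wpM2l.
rewrite -(ler_pM2l (mulr_gt0 u0_gt0 w0_gt0)).
have : u * w * (P * u0 * w0) = u * w * (w0 * s0 ^+ 2 + (u0 + w0) * s0) by rewrite root.
lra.
Qed.

Lemma Afun_weak_snr P a b : 0 < P -> 0 < a -> 0 < b ->
  P * b * (1 - Afun P a b) / (P * b * Afun P a b + 1) = P * Afun P a b * a.
Proof.
move=> P0 a0 b0.
have root := maxmin_snr_root (ltW P0) a0 b0.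
have s0 := maxmin_snr_ge0 (ltW P0) (ltW a0) (ltW b0).
rewrite /maxmin_snr in root s0; set al := Afun P a b in root s0 *.
have al0 : 0 <= al by rewrite -(pmulr_rge0 _ (mulr_gt0 P0 a0)).
have dn : P * b * al + 1 != 0.
  by rewrite gt_eqF //; have := mulr_ge0 (mulr_ge0 (ltW P0) (ltW b0)) al0; lra.
apply: (mulIf dn); rewrite divfK //; apply: (mulIf (lt0r_neq0 a0)).
have : P * a * b - (b * (P * a * al) ^+ 2 + (a + b) * (P * a * al)) = 0.
  by rewrite root subrr.
move=> h; apply/eqP; rewrite -subr_eq0 -h; apply/eqP; ring.
Qed.

End maxmin_snr.

Section rates.
Variable R : realType.

Lemma r_max_maxmin_snr (P h1 h2 : R) :
  r_max P h1 h2 = log2 (1 + maxmin_snr P (Num.max h1 h2) (Num.min h1 h2)).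
Proof.
by rewrite /r_max /maxmin_snr; case: leP.
Qed.

Lemma r_min_q_maxmin_snr (P a1 a2 : R) : 0 < P -> 0 < a1 -> 0 < a2 ->
  r_min_q P a1 a2 = log2 (1 + maxmin_snr P (Num.max a1 a2) (Num.min a1 a2)).
Proof.
move=> P0 a1_gt0 a2_gt0; rewrite /r_min_q a1_gt0 a2_gt0 /=.
by case: leP; rewrite Afun_weak_snr // minxx /maxmin_snr mulrAC.
Qed.

Lemma r_min_q_eq0 (P a1 a2 : R) : 0 <= a1 -> 0 <= a2 -> ~~ ((0 < a1) && (0 < a2)) ->
  r_min_q P a1 a2 = 0.
Proof.
move=> a1_ge0 a2_ge0 a_eq0; rewrite /r_min_q (negbTE a_eq0) /=.
have -> : (if a2 <= a1 then a2 else a1) = 0.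
  by move: a_eq0; rewrite negb_and -!leNgt => /orP[] h; case: ifP; lra.
by rewrite !mulr0 !mul0r !addr0 /log2 ln1 mul0r minxx.
Qed.

Lemma rate_loss_le (P h1 h2 a1 a2 : R) : 0 < P -> 0 < h1 -> 0 < h2 ->
  0 <= a1 <= h1 -> 0 <= a2 <= h2 ->
  r_max P h1 h2 - r_min_q P a1 a2 <= log2 (1 + P * ((h1 - a1) + (h2 - a2))).
Proof.
move=> P0 h1_gt0 h2_gt0 /andP[a1_ge0 a1h] /andP[a2_ge0 a2h].
set d := (h1 - a1) + (h2 - a2).
have d0 : 0 <= d by rewrite /d; lra.
have Pd0 : 0 <= P * d by rewrite mulr_ge0 // ltW.
have hmax_gt0 : 0 < Num.max h1 h2 by rewrite lt_max h1_gt0.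
have hmin_gt0 : 0 < Num.min h1 h2 by rewrite lt_min h1_gt0.
have sh_ge0 := maxmin_snr_ge0 (ltW P0) (ltW hmax_gt0) (ltW hmin_gt0).
rewrite r_max_maxmin_snr.
have [/andP[a1_gt0 a2_gt0] | a_eq0] := boolP ((0 < a1) && (0 < a2)).
  rewrite r_min_q_maxmin_snr //.
  have s0_ge0 : 0 <= maxmin_snr P (Num.max a1 a2) (Num.min a1 a2).
    by rewrite maxmin_snr_ge0 ?le_max ?le_min ?a1_ge0 ?a2_ge0 // ltW.
  have h1d : h1 <= a1 + d by rewrite /d; lra.
  have h2d : h2 <= a2 + d by rewrite /d; lra.
  have amax_gt0 : 0 < Num.max a1 a2 by rewrite lt_max a1_gt0.
  have amin_gt0 : 0 < Num.min a1 a2 by rewrite lt_min a1_gt0.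
  have := maxmin_snr_lipschitz P0 hmax_gt0 hmin_gt0 amax_gt0 amin_gt0 d0.
  rewrite addr_maxl addr_minl => /(_ (le_max2 h1d h2d) (le_min2 h1d h2d)) le_s.
  have := log2_1D_subadd s0_ge0 Pd0.
  have : log2 (1 + maxmin_snr P (Num.max h1 h2) (Num.min h1 h2))
      <= log2 (1 + (maxmin_snr P (Num.max a1 a2) (Num.min a1 a2) + P * d)).
    by apply: ler_log2; [|rewrite lerD2l]; lra.
  lra.
rewrite r_min_q_eq0 // subr0; apply: ler_log2; first lra.
rewrite lerD2l (le_trans (maxmin_snr_le_weak (ltW P0) hmax_gt0 hmin_gt0)) //.
rewrite ler_pM2l // ge_min.
have [a1_le0 | a2_le0] : a1 <= 0 \/ a2 <= 0.
  by move: a_eq0; rewrite negb_and -!leNgt => /orP[]; [left | right].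
- by apply/orP; left; rewrite /d; lra.
- by apply/orP; right; rewrite /d; lra.
Qed.

Definition excess (c x : R) := Num.max (x - c) 0.

Lemma excess_ge0 (c x : R) : 0 <= excess c x.
Proof. by rewrite /excess le_max lexx orbT. Qed.

Lemma q_r_bounds (D T h : R) : 0 < D -> 0 <= T -> 0 < h ->
  [/\ 0 <= q_r D T h, q_r D T h <= h & h - q_r D T h <= D + excess (T * D) h].
Proof.
move=> D0 T0 h0; have := excess_ge0 (T * D) h; rewrite /q_r /excess => exc_ge0.
case: ifP => hT; last first.
  move/negbT: hT; rewrite -ltNge => hT.
  have TD0 : 0 <= T * D by rewrite mulr_ge0 // ltW.
  by rewrite max_l; [split; lra | lra].
have hD0 : 0 <= h / D by rewrite divr_ge0 // ltW.
have f0 : 0 <= (Num.floor (h / D))%:~R :> R by rewrite ler0z floor_ge0.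
have fl : (Num.floor (h / D))%:~R <= h / D :> R by exact: floor_le.
have fg : h / D < (Num.floor (h / D))%:~R + 1 :> R.
  by have := floorD1_gt (h / D); rewrite intrD.
have hE : h = h / D * D by rewrite divfK // gt_eqF.
split; first by rewrite mulr_ge0 // ltW.
  by rewrite {2}hE ler_pM2r.
have : h < ((Num.floor (h / D))%:~R + 1) * D by rewrite {1}hE ltr_pM2r.
rewrite mulrDl mul1r; lra.
Qed.

Lemma r_loss_le (P D T h1 h2 : R) : 0 < P -> 0 < D -> 0 <= T -> 0 < h1 -> 0 < h2 ->
  r_loss P D T h1 h2 <= log2 (1 + P * (2 * D + excess (T * D) h1 + excess (T * D) h2)).
Proof.
move=> P0 D0 T0 h1_gt0 h2_gt0.
have [q1_ge0 q1_le err1] := q_r_bounds D0 T0 h1_gt0.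
have [q2_ge0 q2_le err2] := q_r_bounds D0 T0 h2_gt0.
apply: le_trans (rate_loss_le P0 h1_gt0 h2_gt0 _ _) _; rewrite ?q1_ge0 ?q2_ge0 //.
have err_ge0 : 0 <= (h1 - q_r D T h1) + (h2 - q_r D T h2) by lra.
apply: ler_log2; first by have := mulr_ge0 (ltW P0) err_ge0; lra.
by rewrite lerD2l ler_pM2l //; lra.
Qed.

Lemma r_loss_le_tangent (P D T m h1 h2 : R) :
  0 < P -> 0 < D -> 0 <= T -> 0 <= m -> 0 < h1 -> 0 < h2 ->
  r_loss P D T h1 h2 <= log2 (1 + P * m)
    + P / ((1 + P * m) * ln 2) * (2 * D + excess (T * D) h1 + excess (T * D) h2 - m).
Proof.
move=> P0 D0 T0 m0 h1_gt0 h2_gt0.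
apply: le_trans (r_loss_le P0 D0 T0 h1_gt0 h2_gt0) _.
set Phi := 2 * D + _ + _.
have Pm0 : 0 <= P * m by rewrite mulr_ge0 // ltW.
have Phi0 : 0 <= P * Phi by rewrite mulr_ge0 ?addr_ge0 ?excess_ge0 //; [exact: ltW | lra].
apply: le_trans (@log2_le_tangent R _ (1 + P * m) _ _) _; [lra | lra |].
have -> : (1 + P * Phi - (1 + P * m)) / ((1 + P * m) * ln 2)
    = P / ((1 + P * m) * ln 2) * (Phi - m) by ring.
by [].
Qed.

End rates.

Section integral_lemmas.
Local Open Scope ereal_scope.

(* No measurability of [f] is needed: the integral of [f^\+] is a supremum
   over simple functions below [f^\+], hence below [g]. *)
Lemma le_integral_ge0_majorant d (T : measurableType d) (R : realType)
    (mu : {measure set T -> \bar R}) (f g : T -> \bar R) :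
  (forall x, 0 <= g x) -> (forall x, f x <= g x) ->
  \int[mu]_x f x <= \int[mu]_x g x.
Proof.
move=> g0 fg; rewrite integralE.
apply: (@le_trans _ _ (\int[mu]_x f^\+ x - 0)).
  by apply: leeB => //; apply: integral_ge0 => x _; exact: funeneg_ge0.
rewrite sube0 [leLHS]ge0_integralTE; last by move=> x; exact: funepos_ge0.
rewrite ge0_integralTE //; apply: ereal_sup_le => _ [h /= hf <-].
exists h => //= x; apply: le_trans (hf x) _.
by rewrite funeposE ge_max fg g0.
Qed.

Lemma measurable_fun_prod_sep d1 d2 (T1 : measurableType d1) (T2 : measurableType d2)
    (R : realType) (phi : T1 -> R) (psi : T2 -> R) :
  measurable_fun setT phi -> measurable_fun setT psi ->
  measurable_fun setT (fun z : T1 * T2 => (phi z.1 * psi z.2)%:E).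
Proof.
move=> mphi mpsi; apply/measurable_EFinP; apply: measurable_funM.
  exact: measurableT_comp mphi measurable_fst.
exact: measurableT_comp mpsi measurable_snd.
Qed.

End integral_lemmas.

Section exponential.
Variable R : realType.
Local Notation mu := (@lebesgue_measure R).

Lemma exp_densityE (l x : R) : 0 < l ->
  exp_density l x = if 0 < x then exponential_pdf l^-1 x else 0.
Proof.
move=> l0; rewrite /exp_density; case: ifP => // x0.
by rewrite exponential_pdfE ?ltW // mulrC mulNr [l^-1 * x]mulrC.
Qed.

Lemma exponential_pdfV_ge0 (l x : R) : 0 < l -> 0 <= exponential_pdf l^-1 x.
Proof. by move=> l0; apply: exponential_pdf_ge0; rewrite invr_ge0 ltW. Qed.

Lemma measurable_excess (c : R) : measurable_fun setT (excess c).
Proof.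
apply: measurable_maxr; last exact: measurable_cst.
exact: measurable_funB.
Qed.

Lemma integral_scaled_exponential_pdf (a l : R) : 0 <= a -> 0 < l ->
  (\int[mu]_x (a * exponential_pdf l^-1 x)%:E = a%:E)%E.
Proof.
move=> a0 l0; under eq_integral do rewrite EFinM.
rewrite ge0_integralZl_EFin //; last 2 first.
- by move=> x _; rewrite lee_fin exponential_pdfV_ge0.
- by apply/measurable_EFinP; exact: measurable_exponential_pdf.
by rewrite integral_exponential_pdf ?invr_gt0 // mule1.
Qed.

Lemma exponential_pdf_tail_le (r c : R) : 0 < r -> 0 <= c ->
  (\int[mu]_(x in ~` `[0%R, c]) (exponential_pdf r x)%:E <= (expR (- r * c))%:E)%E.
Proof.
move=> r0; rewrite le_eqVlt => /predU1P[<- | c0].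
  rewrite mulr0 expR0 -(integral_exponential_pdf r0).
  apply: ge0_subset_integral => //; first exact: measurableC.
    by apply/measurable_EFinP; exact: measurable_exponential_pdf.
  by move=> x _; rewrite lee_fin exponential_pdf_ge0 // ltW.
have := integral_exponential_pdf r0.
rewrite -(setUv `[0, c]) ge0_integral_setU //=; last 4 first.
- exact: measurableC.
- by rewrite setUv; apply/measurable_EFinP; exact: measurable_exponential_pdf.
- by move=> x _; rewrite lee_fin exponential_pdf_ge0 // ltW.
- exact/disj_setPCl.
have := exponential_prob_itv0c r c0; rewrite /exponential_prob => ->.
case: (\int[mu]_(x in ~` `[0%R, c]) _)%E => [t | | ] //= /eqP.
by rewrite -EFinD eqe => /eqP tE; rewrite lee_fin; lra.
Qed.

(* Since (x - c) e^(-(x - c)/(2l)) <= 2l, the excess weighted by the density of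
   mean l is dominated by a multiple of the density of mean 2l. *)
Lemma excess_exponential_pdf_le (c l x : R) : 0 <= c -> 0 < l ->
  excess c x * exponential_pdf l^-1 x <=
  4 * l * expR (- (c / (2 * l))) * exponential_pdf (2 * l)^-1 x.
Proof.
move=> c0 l0; have l2 : 0 < 2 * l by lra.
have rhs_ge0 := exponential_pdfV_ge0 x l2.
case: (ltP x c) => xc.
  rewrite /excess max_r ?mul0r ?mulr_ge0 ?expR_ge0 //; lra.
rewrite /excess max_l; last lra.
rewrite !exponential_pdfE ?invr_ge0; try lra.
have l_neq0 : l != 0 by rewrite gt_eqF.
set y := (x - c) / l; set A := - ((x + c) / (2 * l)).
have y0 : 0 <= y by rewrite divr_ge0 //; lra.
have e1 : expR (- l^-1 * x) = expR A * expR (- (y / 2)).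
  by rewrite -expRD /A /y; congr expR; field.
have e2 : expR (- (c / (2 * l))) * expR (- (2 * l)^-1 * x) = expR A.
  by rewrite -expRD /A; congr expR; field.
have -> : (x - c) * (l^-1 * expR (- l^-1 * x)) = y * expR (- (y / 2)) * expR A.
  by rewrite e1 /y; field.
have -> : 4 * l * expR (- (c / (2 * l))) * ((2 * l)^-1 * expR (- (2 * l)^-1 * x))
    = 2 * expR A by rewrite -e2; field.
rewrite ler_pM2r ?expR_gt0 // expRN ler_pdivrMr ?expR_gt0 //.
by have := expR_ge1Dx (y / 2); lra.
Qed.

Lemma integral_excess_exponential_le (c l : R) : 0 <= c -> 0 < l ->
  (\int[mu]_x (excess c x * exponential_pdf l^-1 x)%:E
    <= (4 * l * expR (- (c / l)))%:E)%E.
Proof.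
move=> c0 l0; have l2 : 0 < 2 * l by lra.
set K := 4 * l * expR (- (c / (2 * l))).
have K0 : 0 <= K by rewrite /K mulr_ge0 ?expR_ge0 //; lra.
have f_ge0 x : 0 <= excess c x * exponential_pdf l^-1 x.
  by rewrite mulr_ge0 ?excess_ge0 ?exponential_pdfV_ge0.
have mf : measurable_fun setT (EFin \o (fun x => excess c x * exponential_pdf l^-1 x)).
  apply/measurable_EFinP; apply: measurable_funM (measurable_excess c) _.
  exact: measurable_exponential_pdf.
have mg : measurable_fun setT (EFin \o exponential_pdf (2 * l)^-1).
  by apply/measurable_EFinP; exact: measurable_exponential_pdf.
rewrite -(setUv `[0, c]) ge0_integral_setU //=; last 4 first.
- exact: measurableC.
- by rewrite setUv.
- by move=> x _; rewrite lee_fin.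
- exact/disj_setPCl.
rewrite integral0_eq ?add0e; last first.
  move=> x; rewrite /= in_itv /= => /andP[_ xc].
  by rewrite /excess max_r ?mul0r //; lra.
apply: (@le_trans _ _ (\int[mu]_(x in ~` `[0%R, c]) (K%:E * (exponential_pdf (2 * l)^-1 x)%:E))%E).
  apply: ge0_le_integral => //.
  - exact: measurableC.
  - by move=> x _; rewrite lee_fin.
  - exact: measurable_funS mf.
  - by apply: measurable_funeM; exact: measurable_funS mg.
  - by move=> x _; rewrite -EFinM lee_fin; exact: excess_exponential_pdf_le.
rewrite ge0_integralZl_EFin //; last 3 first.
- exact: measurableC.
- by move=> x _; rewrite lee_fin exponential_pdfV_ge0.
- exact: measurable_funS mg.
have -> : 4 * l * expR (- (c / l)) = K * expR (- (2 * l)^-1 * c).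
  by rewrite /K -[RHS]mulrA -expRD; congr (_ * expR _); field; rewrite gt_eqF.
rewrite [X in (_ <= X)%E]EFinM; apply: lee_wpmul2l; first by rewrite lee_fin.
by apply: exponential_pdf_tail_le; rewrite ?invr_gt0.
Qed.

Lemma integral_affine_excess_le (a b c l : R) : 0 <= a -> 0 <= b -> 0 <= c -> 0 < l ->
  (\int[mu]_x ((a + b * excess c x) * exponential_pdf l^-1 x)%:E
    <= (a + b * (4 * l * expR (- (c / l))))%:E)%E.
Proof.
move=> a0 b0 c0 l0.
have mpdf : measurable_fun setT (EFin \o exponential_pdf l^-1).
  by apply/measurable_EFinP; exact: measurable_exponential_pdf.
have mf : measurable_fun setT (EFin \o (fun x => excess c x * exponential_pdf l^-1 x)).
  apply/measurable_EFinP; apply: measurable_funM (measurable_excess c) _.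
  exact: measurable_exponential_pdf.
under eq_integral do rewrite mulrDl -mulrA EFinD !EFinM.
rewrite ge0_integralD //; last 4 first.
- by move=> x _; rewrite -EFinM lee_fin mulr_ge0 ?exponential_pdfV_ge0.
- exact: measurable_funeM mpdf.
- by move=> x _; rewrite -EFinM lee_fin !mulr_ge0 ?excess_ge0 ?exponential_pdfV_ge0.
- exact: measurable_funeM mf.
rewrite !ge0_integralZl_EFin //; last 2 first.
- by move=> x _; rewrite lee_fin mulr_ge0 ?excess_ge0 ?exponential_pdfV_ge0.
- by move=> x _; rewrite lee_fin exponential_pdfV_ge0.
rewrite integral_exponential_pdf ?invr_gt0 // mule1 EFinD leeD2l // EFinM.
by apply: lee_wpmul2l; [rewrite lee_fin | exact: integral_excess_exponential_le].
Qed.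

Lemma integral_prod_sep (phi psi : R -> R) :
  (forall x, 0 <= phi x) -> (forall y, 0 <= psi y) ->
  measurable_fun setT phi -> measurable_fun setT psi ->
  (\int[mu \x mu]_z (phi z.1 * psi z.2)%:E
   = \int[mu]_x (phi x)%:E * \int[mu]_y (psi y)%:E)%E.
Proof.
move=> phi0 psi0 mphi mpsi.
rewrite (@fubini_tonelli1 _ _ _ _ _ mu mu _ (measurable_fun_prod_sep mphi mpsi)); last first.
  by move=> z; rewrite lee_fin mulr_ge0.
rewrite /fubini_F /= -ge0_integralZr //; last 3 first.
- exact/measurable_EFinP.
- by move=> x _; rewrite lee_fin.
- by apply: integral_ge0 => y _; rewrite lee_fin.
apply: eq_integral => x _; under eq_integral do rewrite EFinM.
rewrite ge0_integralZl_EFin // ?muleC //.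
- by move=> y _; rewrite lee_fin.
- exact/measurable_EFinP.
Qed.

Lemma integral_prod_excess_le (K k c l1 l2 : R) :
  0 <= K -> 0 <= k -> 0 <= c -> 0 < l1 -> 0 < l2 ->
  (\int[mu \x mu]_z ((K + k * (excess c z.1 + excess c z.2))
       * exponential_pdf l1^-1 z.1 * exponential_pdf l2^-1 z.2)%:E
   <= (K + k * (4 * l1 * expR (- (c / l1)) + 4 * l2 * expR (- (c / l2))))%:E)%E.
Proof.
move=> K0 k0 c0 l1_gt0 l2_gt0.
pose f1 x := (K + k * excess c x) * exponential_pdf l1^-1 x.
pose g1 x := k * exponential_pdf l1^-1 x.
pose g2 y := excess c y * exponential_pdf l2^-1 y.
have mpdf (l : R) : measurable_fun setT (exponential_pdf l^-1 : R -> R).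
  exact: measurable_exponential_pdf.
have mf1 : measurable_fun setT f1.
  apply: measurable_funM (mpdf l1); apply: measurable_funD (measurable_cst K) _.
  exact: measurable_funM (measurable_cst k) (measurable_excess c).
have mg1 : measurable_fun setT g1 := measurable_funM (measurable_cst k) (mpdf l1).
have mg2 : measurable_fun setT g2 := measurable_funM (measurable_excess c) (mpdf l2).
have f1_ge0 x : 0 <= f1 x.
  by rewrite mulr_ge0 ?addr_ge0 ?mulr_ge0 ?excess_ge0 ?exponential_pdfV_ge0.
have g1_ge0 x : 0 <= g1 x by rewrite mulr_ge0 ?exponential_pdfV_ge0.
have g2_ge0 y : 0 <= g2 y by rewrite mulr_ge0 ?excess_ge0 ?exponential_pdfV_ge0.
have pdf2_ge0 y : 0 <= exponential_pdf l2^-1 y := exponential_pdfV_ge0 y l2_gt0.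
have sep (z : R * R) :
    ((K + k * (excess c z.1 + excess c z.2))
       * exponential_pdf l1^-1 z.1 * exponential_pdf l2^-1 z.2)%:E
    = ((f1 z.1 * exponential_pdf l2^-1 z.2)%:E + (g1 z.1 * g2 z.2)%:E)%E.
  by rewrite -EFinD /f1 /g1 /g2; congr EFin; ring.
under eq_integral do rewrite sep.
rewrite ge0_integralD //; last 4 first.
- by move=> z _; rewrite lee_fin mulr_ge0.
- exact: measurable_fun_prod_sep mf1 (mpdf l2).
- by move=> z _; rewrite lee_fin mulr_ge0.
- exact: measurable_fun_prod_sep mg1 mg2.
rewrite !integral_prod_sep // integral_exponential_pdf ?invr_gt0 // mule1.
rewrite /g1 integral_scaled_exponential_pdf //.
rewrite mulrDr addrA [X in (_ <= X)%E]EFinD.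
apply: leeD; first exact: integral_affine_excess_le.
rewrite [X in (_ <= X)%E]EFinM; apply: lee_wpmul2l; first by rewrite lee_fin.
exact: integral_excess_exponential_le.
Qed.

Lemma vle_len_le (D T x : R) : 0 < D -> 0 <= T -> 0 < x ->
  vle_len D T x <= log2 (x / D + 2).
Proof.
move=> D0 T0 x0; have xD0 : 0 <= x / D by rewrite divr_ge0 // ltW.
rewrite /vle_len; case: ifP => hx; apply: le_trans (floor_le _) _; apply: ler_log2.
- have : 0 <= (Num.floor (x / D))%:~R :> R by rewrite ler0z floor_ge0.
  by lra.
- by rewrite lerD2r floor_le.
- lra.
- by move/negbT: hx; rewrite -ltNge lerD2r ler_pdivlMr // => /ltW.
Qed.

Lemma vle_len_density_le (l D T x : R) : 0 < l -> 0 < D -> 0 <= T ->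
  vle_len D T x * exp_density l x
  <= (log2 (l / D + 2) + ((l + 2 * D) * ln 2)^-1 * excess 0 x) * exponential_pdf l^-1 x.
Proof.
move=> l0 D0 T0; have lD0 : 0 <= l / D by rewrite divr_ge0 // ltW.
have a0 : 0 <= log2 (l / D + 2) by apply: log2_ge0; lra.
have k0 : 0 <= ((l + 2 * D) * ln 2)^-1 by rewrite invr_ge0 mulr_ge0 ?(ltW (@ln2_gt0 R)) //; lra.
have pdf_ge0 := exponential_pdfV_ge0 x l0.
rewrite exp_densityE //; case: ifP => x0; last first.
  by rewrite mulr0 mulr_ge0 // addr_ge0 // mulr_ge0 // excess_ge0.
rewrite ler_wpM2r // /excess subr0 (max_l (ltW x0)).
apply: le_trans (vle_len_le D0 T0 x0) _.
have xD0 : 0 <= x / D by rewrite divr_ge0 // ltW.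
apply: le_trans (@log2_le_tangent R (x / D + 2) (l / D + 2) _ _) _; [lra | lra |].
have -> : (x / D + 2 - (l / D + 2)) / ((l / D + 2) * ln 2)
    = ((l + 2 * D) * ln 2)^-1 * (x - l).
  by field; rewrite !gt_eqF ?(@ln2_gt0 R) //; lra.
by rewrite lerD2l ler_wpM2l //; lra.
Qed.

Lemma R_VLE_le (l D T : R) : 0 < l -> 0 < D -> 0 <= T ->
  R_VLE l D T <= log2 (l / D + 2) + 4 / ln 2.
Proof.
move=> l0 D0 T0; have lD0 : 0 <= l / D by rewrite divr_ge0 // ltW.
set a := log2 _; set k := ((l + 2 * D) * ln 2)^-1.
have a0 : 0 <= a by apply: log2_ge0; lra.
have k0 : 0 <= k by rewrite invr_ge0 mulr_ge0 ?(ltW (@ln2_gt0 R)) //; lra.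
have b0 : 0 <= a + k * (4 * l * expR (- (0 / l))).
  by rewrite addr_ge0 // !mulr_ge0 ?expR_ge0 //; lra.
have I_le : (\int[mu]_x (vle_len D T x * exp_density l x)%:E
    <= (a + k * (4 * l * expR (- (0 / l))))%:E)%E.
  apply: le_trans (integral_affine_excess_le a0 k0 (lexx 0) l0).
  apply: le_integral_ge0_majorant => x.
    by rewrite lee_fin mulr_ge0 ?exponential_pdfV_ge0 // addr_ge0 // mulr_ge0 // excess_ge0.
  by rewrite lee_fin; exact: vle_len_density_le.
apply: (@le_trans _ _ (a + k * (4 * l * expR (- (0 / l))))).
  by move: I_le; rewrite /R_VLE /Rintegral; case: (\int[mu]_x _)%E => //= r; rewrite lee_fin.
rewrite lerD2l mul0r oppr0 expR0 mulr1 /k.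
have -> : ((l + 2 * D) * ln 2)^-1 * (4 * l) = 4 * l / (l + 2 * D) / ln 2.
  by field; rewrite !gt_eqF ?(@ln2_gt0 R) //; lra.
by rewrite ler_pM2r ?invr_gt0 ?(@ln2_gt0 R) // ler_pdivrMr; lra.
Qed.

Lemma E_rloss_le_tangent (lam1 lam2 P D T m : R) :
  0 < lam1 -> 0 < lam2 -> 0 < P -> 0 < D -> 0 <= T -> 0 <= m ->
  (E_rloss lam1 lam2 P D T <= (log2 (1 + P * m) + P / ((1 + P * m) * ln 2)
     * (2 * D + (4 * lam1 * expR (- (T * D / lam1)) + 4 * lam2 * expR (- (T * D / lam2)))
        - m))%:E)%E.
Proof.
move=> l1_gt0 l2_gt0 P0 D0 T0 m0.
set c := T * D; set k := P / ((1 + P * m) * ln 2).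
have c0 : 0 <= c by rewrite mulr_ge0 // ltW.
have Pm0 : 0 <= P * m by rewrite mulr_ge0 // ltW.
have k0 : 0 <= k by rewrite divr_ge0 // ?ltW // mulr_gt0 ?(@ln2_gt0 R) //; lra.
set K := log2 (1 + P * m) - k * m + k * (2 * D).
have K0 : 0 <= K.
  have := @log2_le_tangent R 1 (1 + P * m) ltr01 ltac:(lra).
  have -> : (1 - (1 + P * m)) / ((1 + P * m) * ln 2) = - (k * m) by rewrite /k; ring.
  have : 0 <= k * (2 * D) by rewrite mulr_ge0 //; lra.
  by rewrite {1}/log2 ln1 mul0r /K; lra.
have bound_ge0 (z : R * R) : 0 <= (K + k * (excess c z.1 + excess c z.2))
    * exponential_pdf lam1^-1 z.1 * exponential_pdf lam2^-1 z.2.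
  rewrite mulr_ge0 ?exponential_pdfV_ge0 // mulr_ge0 ?exponential_pdfV_ge0 //.
  by rewrite addr_ge0 // mulr_ge0 // addr_ge0 // excess_ge0.
rewrite [X in (_ <= X)%E](_ : _ = (K + k * (4 * lam1 * expR (- (c / lam1))
                                       + 4 * lam2 * expR (- (c / lam2))))%:E); last first.
  by rewrite /K; congr EFin; ring.
apply: le_trans (integral_prod_excess_le K0 k0 c0 l1_gt0 l2_gt0).
apply: le_integral_ge0_majorant => z; first by rewrite lee_fin bound_ge0.
rewrite lee_fin !exp_densityE //.
case: ifP => h1_gt0; last by rewrite mulr0 mul0r bound_ge0.
case: ifP => h2_gt0; last by rewrite mulr0 bound_ge0.
rewrite ler_wpM2r ?exponential_pdfV_ge0 // ler_wpM2r ?exponential_pdfV_ge0 //.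
apply: le_trans (r_loss_le_tangent P0 D0 T0 m0 h1_gt0 h2_gt0) _.
by rewrite /K -/c -/k; lra.
Qed.

Lemma E_rloss_le (lam1 lam2 P D T : R) :
  0 < lam1 -> 0 < lam2 -> 0 < P -> 0 < D -> 0 <= T ->
  expR (- (T * D / lam1)) <= D -> expR (- (T * D / lam2)) <= D ->
  (E_rloss lam1 lam2 P D T <= (log2 (1 + P * ((2 + 4 * lam1 + 4 * lam2) * D)))%:E)%E.
Proof.
move=> l1_gt0 l2_gt0 P0 D0 T0 tail1 tail2.
have m0 : 0 <= (2 + 4 * lam1 + 4 * lam2) * D by rewrite mulr_ge0 //; [lra | exact: ltW].
apply: le_trans (E_rloss_le_tangent l1_gt0 l2_gt0 P0 D0 T0 m0) _.
have Pm0 := mulr_ge0 (ltW P0) m0.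
rewrite lee_fin gerDl; apply: mulr_ge0_le0.
  by rewrite divr_ge0 ?mulr_ge0 ?(ltW P0) ?(ltW (@ln2_gt0 R)) //; lra.
have : 4 * lam1 * expR (- (T * D / lam1)) <= 4 * lam1 * D by rewrite ler_pM2l //; lra.
have : 4 * lam2 * expR (- (T * D / lam2)) <= 4 * lam2 * D by rewrite ler_pM2l //; lra.
lra.
Qed.

End exponential.

Section threshold.
Variable R : realType.

Lemma expR_threshold_le (lam1 l D : R) : 0 < l -> l <= lam1 -> 0 < D -> D <= 1 ->
  expR (- (lam1 / D * ln (1 / D) * D / l)) <= D.
Proof.
move=> l0 l_le D0 D1.
have lnD : ln D <= 0 by exact: ln_le0.
have ratio : 1 <= lam1 / l by rewrite ler_pdivlMr // mul1r.
have DE : D = expR (ln D) by rewrite lnK // posrE.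
rewrite [leRHS]DE ler_expR div1r lnV ?posrE //.
have -> : - (lam1 / D * - ln D * D / l) = lam1 / l * ln D by field; rewrite !gt_eqF.
by nra.
Qed.

Lemma le_pow2_R_VLE (l D T r : R) : 0 < l -> 0 < D -> D <= 1 -> 0 <= T ->
  r <= R_VLE l D T -> D <= (l + 2) * expR 4 * 2 `^ (- r).
Proof.
move=> l0 D0 D1 T0 /le_trans /(_ (R_VLE_le l0 D0 T0)) r_le.
have ln2 := @ln2_gt0 R.
set v := l / D + 2.
have v0 : 0 < v by rewrite /v; have := divr_gt0 l0 D0; lra.
have pow_ge : v^-1 * expR (-4) <= 2 `^ (- r).
  rewrite -[v^-1](lnK (_ : v^-1 \in Num.pos)) ?posrE ?invr_gt0 // lnV ?posrE //.
  rewrite -expRD /powR (negbTE (_ : (2 : R) != 0)) ?pnatr_eq0 // ler_expR.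
  have := ler_wpM2r (ltW ln2) r_le; rewrite mulrDl /log2 !divfK ?gt_eqF //; lra.
apply: (@le_trans _ _ ((l + 2) / v)).
  rewrite ler_pdivlMr //.
  have -> : D * v = l + 2 * D by rewrite /v; field; rewrite gt_eqF.
  lra.
have e4 : expR 4 * expR (-4) = 1 :> R by rewrite -expRD subrr expR0.
have -> : (l + 2) / v = (l + 2) * expR 4 * (v^-1 * expR (-4)).
  by rewrite -mulrA (mulrCA (expR 4)) e4 mulr1.
by rewrite ler_wpM2l // mulr_ge0 ?expR_ge0 //; lra.
Qed.

End threshold.

Theorem theorem2 (R : realType) (lam1 lam2 : R) :
  0 < lam2 -> lam2 <= lam1 ->
  exists C2 C3 : R, 0 < C2 /\ 0 < C3 /\
    forall Delta P : R, 0 < Delta -> Delta <= 1 -> 0 < P ->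
      let T := lam1 / Delta * ln (1 / Delta) in
      let Rmin := Num.min (R_VLE lam1 Delta T) (R_VLE lam2 Delta T) in
      (E_rloss lam1 lam2 P Delta T <= (log2 (1 + C2 * P * 2 `^ (- Rmin)))%:E)%E /\
      log2 (1 + C2 * P * 2 `^ (- Rmin)) <= C3 * P * 2 `^ (- Rmin).
Proof.
move=> l2_gt0 l21; have l1_gt0 : 0 < lam1 by lra.
set M := 2 + 4 * lam1 + 4 * lam2; set C2 := M * (lam1 + 2) * expR 4.
have M_gt0 : 0 < M by rewrite /M; lra.
have C2_gt0 : 0 < C2 by rewrite !mulr_gt0 ?expR_gt0 //; lra.
exists C2, (C2 / ln 2); split => //; split; first by rewrite divr_gt0 ?ln2_gt0.
move=> D P D0 D1 P0 T Rmin.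
have T0 : 0 <= T.
  by rewrite mulr_ge0 ?divr_ge0 ?ln_ge0 ?(ltW l1_gt0) ?(ltW D0) // ler_pdivlMr // mul1r.
have D_le : D <= (lam1 + 2) * expR 4 * 2 `^ (- Rmin).
  by apply: (le_pow2_R_VLE (T := T)) => //; rewrite /Rmin ge_min lexx.
split.
  apply: le_trans (E_rloss_le l1_gt0 l2_gt0 P0 D0 T0
    (expR_threshold_le l1_gt0 (lexx _) D0 D1) (expR_threshold_le l2_gt0 l21 D0 D1)) _.
  rewrite lee_fin -/M; apply: ler_log2; first by have := mulr_gt0 P0 (mulr_gt0 M_gt0 D0); lra.
  have := ler_wpM2l (ltW (mulr_gt0 P0 M_gt0)) D_le.
  by rewrite /C2; lra.
have -> : C2 / ln 2 * P * 2 `^ (- Rmin) = C2 * P * 2 `^ (- Rmin) / ln 2 by ring.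
exact: log2_1D_le (mulr_ge0 (mulr_ge0 (ltW C2_gt0) (ltW P0)) (powR_ge0 _ _)).
Qed.
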